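(* Let $\rho_{AB}$ be a density matrix on $\mathcal H_A\otimes\mathcal H_B$, let $\Phi:\mathbf L(\mathcal H_A)\to\mathbf L(\mathcal H_{A'})$ and $\Psi:\mathbf L(\mathcal H_B)\to\mathbf L(\mathcal H_{B'})$ be completely positive trace-preserving maps, and let $\sigma_{A'B'}=(\Phi\otimes\Psi)(\rho_{AB})$. Then $\mu_{\mathrm{ent}}(\rho_{AB})\geq\mu_{\mathrm{ent}}(\sigma_{A'B'})$.
   Context: All Hilbert spaces are finite-dimensional. For a bipartite density matrix $\rho_{AB}$ with reduced states $\rho_A,\rho_B$, the maximal correlation is $\mu(\rho_{AB})=\max |\mathrm{tr}(\rho_{AB}\, X_A\otimes Y_B^\dagger)|$ over $X_A\in\mathbf L(\mathcal H_A)$, $Y_B\in\mathbf L(\mathcal H_B)$ with $\mathrm{tr}(\rho_A X_A)=\mathrm{tr}(\rho_B Y_B)=0$ and $\mathrm{tr}(\rho_A X_AX_A^\dagger)=\mathrm{tr}(\rho_B Y_BY_B^\dagger)=1$. The maximal entanglement is $\mu_{\mathrm{ent}}(\rho_{AB})=\inf \max_i \mu(\tau^{(i)}_{AB})$, the infimum over all decompositions $\rho_{AB}=\sum_i p_i\tau^{(i)}_{AB}$ with $p_i\ge0$ and $\tau^{(i)}_{AB}$ density matrices on $\mathcal H_A\otimes\mathcal H_B$. *)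

From HB Require Import structures.
From mathcomp Require Import all_boot all_order all_algebra.
From mathcomp Require Import complex mxtens.
From mathcomp Require Import boolp classical_sets reals.

Set Implicit Arguments.
Unset Strict Implicit.
Unset Printing Implicit Defensive.

Import Order.TTheory GRing.Theory Num.Theory.
Local Open Scope ring_scope.

Section QDefs.
Variable R : realType.
Local Notation C := R[i].

Definition adj {m n : nat} (M : 'M[C]_(m, n)) : 'M[C]_(n, m) := (map_mx conjc M)^T.

Definition psd {n : nat} (M : 'M[C]_n) : Prop :=
  adj M = M /\ forall v : 'cV[C]_n, 0 <= (adj v *m M *m v) 0 0.

Definition density {n : nat} (M : 'M[C]_n) : Prop := psd M /\ \tr M = 1.

Local Unset Implicit Arguments.
Definition ptrB (dA dB : nat) (M : 'M[C]_(dA * dB)) : 'M[C]_dA :=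
  \matrix_(i, j) \sum_(k < dB) M (mxtens_index (i, k)) (mxtens_index (j, k)).
Definition ptrA (dA dB : nat) (M : 'M[C]_(dA * dB)) : 'M[C]_dB :=
  \matrix_(i, j) \sum_(k < dA) M (mxtens_index (k, i)) (mxtens_index (k, j)).

Definition maxcorr (dA dB : nat) (rho : 'M[C]_(dA * dB)) : R :=
  sup [set r : R | exists (X : 'M[C]_dA) (Y : 'M[C]_dB),
     [/\ \tr (ptrB dA dB rho *m X) = 0, \tr (ptrA dA dB rho *m Y) = 0,
         \tr (ptrB dA dB rho *m (X *m adj X)) = 1, \tr (ptrA dA dB rho *m (Y *m adj Y)) = 1
       & real_complex R r = `|\tr (rho *m (X *t adj Y))|]].

Definition maxent (dA dB : nat) (rho : 'M[C]_(dA * dB)) : R :=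
  inf [set t : R | exists (n : nat) (p : 'I_n -> R) (tau : 'I_n -> 'M[C]_(dA * dB)),
     [/\ forall i, 0 <= p i, forall i, density (tau i),
         rho = \sum_(i < n) (real_complex R (p i)) *: tau i
       & t = \big[Num.max/0]_(i < n) maxcorr dA dB (tau i)]].

Local Set Implicit Arguments.

(* (id_k (x) Phi) acting on L(C^k (x) H_A) *)
Definition ampl (k dA dA' : nat) (Phi : 'M[C]_dA -> 'M[C]_dA')
    (M : 'M[C]_(k * dA)) : 'M[C]_(k * dA') :=
  \sum_(i < k) \sum_(j < k)
     (delta_mx i j *t Phi (\matrix_(a, b) M (mxtens_index (i, a)) (mxtens_index (j, b)))).

Definition completely_positive (dA dA' : nat) (Phi : 'M[C]_dA -> 'M[C]_dA') : Prop :=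
  forall (k : nat) (M : 'M[C]_(k * dA)), psd M -> psd (ampl Phi M).

Definition trace_preserving (dA dA' : nat) (Phi : 'M[C]_dA -> 'M[C]_dA') : Prop :=
  forall X : 'M[C]_dA, \tr (Phi X) = \tr X.

Definition tensmap (dA dB dA' dB' : nat) (Phi : 'M[C]_dA -> 'M[C]_dA')
    (Psi : 'M[C]_dB -> 'M[C]_dB') (M : 'M[C]_(dA * dB)) : 'M[C]_(dA' * dB') :=
  \sum_(i < dA) \sum_(j < dA) \sum_(k < dB) \sum_(l < dB)
     M (mxtens_index (i, k)) (mxtens_index (j, l))
       *: (Phi (delta_mx i j) *t Psi (delta_mx k l)).

End QDefs.

Arguments ptrA {R} dA dB M.
Arguments ptrB {R} dA dB M.
Arguments maxcorr {R} dA dB rho.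
Arguments maxent {R} dA dB rho.

From HB Require Import structures.
From mathcomp Require Import all_boot all_order all_algebra.
From mathcomp Require Import complex mxtens.
From mathcomp Require Import boolp classical_sets reals.
From mathcomp Require Import ring lra.
Import Order.TTheory GRing.Theory Num.Theory.
Local Open Scope ring_scope.

Set Implicit Arguments.
Unset Strict Implicit.
Unset Printing Implicit Defensive.

(* Every decomposition [rho = sum_i p_i tau_i] is carried by [Phi (x) Psi] to a
   decomposition of [sigma] into the density matrices [(Phi (x) Psi) tau_i], so
   it suffices that local channels do not increase the maximal correlation.
   Given centred observables [X'], [Y'] of unit variance for [sigma], their
   pull-backs [X = Phi^* X'], [Y = Psi^* Y'] under the Heisenberg-picture duals
   have the same correlation with [tau] and are still centred, while by the
   Kadison-Schwarz inequality for the unital completely positive maps [Phi^*],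
   [Psi^*] their variances are at most 1; rescaling them to unit variance can
   only increase the correlation. *)

Local Notation tidx := mxtens_index.
Local Notation untidx := mxtens_unindex.

Lemma sum_mxtens_index (V : nmodType) m n (F : 'I_(m * n) -> V) :
  \sum_k F k = \sum_(i < m) \sum_(j < n) F (tidx (i, j)).
Proof.
rewrite pair_big /= (reindex (@mxtens_index m n)) /=; last first.
  by exists (@mxtens_unindex m n) => k _; rewrite ?mxtens_indexK ?mxtens_unindexK.
by apply: eq_bigr => -[i j].
Qed.

Lemma sum_eq_single (V : nmodType) n (F : 'I_n -> V) (i : 'I_n) :
  (forall j, j != i -> F j = 0) -> \sum_j F j = F i.
Proof. by move=> F0; rewrite (bigD1 i) //= big1 ?addr0. Qed.

Lemma tensmxZl (R : comPzRingType) m n p q (c : R) (A : 'M[R]_(m, n))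
    (B : 'M[R]_(p, q)) :
  (c *: A) *t B = c *: (A *t B).
Proof.
apply/matrixP => k l.
case: (mxtens_indexP k) => a b; case: (mxtens_indexP l) => e d.
by rewrite !mxE !mxtens_indexK /= mulrA.
Qed.

Lemma tensmxZr (R : comPzRingType) m n p q (c : R) (A : 'M[R]_(m, n))
    (B : 'M[R]_(p, q)) :
  A *t (c *: B) = c *: (A *t B).
Proof.
apply/matrixP => k l.
case: (mxtens_indexP k) => a b; case: (mxtens_indexP l) => e d.
by rewrite !mxE !mxtens_indexK /= mulrCA.
Qed.

Section Adjoint.
Variable R : realType.
Local Notation C := R[i].

Lemma adjE m n (M : 'M[C]_(m, n)) i j : adj M i j = (M j i)^*%C.
Proof. by rewrite !mxE. Qed.

Lemma adjK m n (M : 'M[C]_(m, n)) : adj (adj M) = M.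
Proof. by apply/matrixP => i j; rewrite !adjE conjcK. Qed.

Lemma adjD m n (M N : 'M[C]_(m, n)) : adj (M + N) = adj M + adj N.
Proof. by apply/matrixP => i j; rewrite !mxE rmorphD. Qed.

Lemma adjN m n (M : 'M[C]_(m, n)) : adj (- M) = - adj M.
Proof. by apply/matrixP => i j; rewrite !mxE rmorphN. Qed.

Lemma adjZ m n (c : C) (M : 'M[C]_(m, n)) : adj (c *: M) = c^*%C *: adj M.
Proof. by apply/matrixP => i j; rewrite !mxE rmorphM. Qed.

Lemma adj_sum m n I (r : seq I) (P : pred I) (F : I -> 'M[C]_(m, n)) :
  adj (\sum_(i <- r | P i) F i) = \sum_(i <- r | P i) adj (F i).
Proof.
apply/matrixP => i j; rewrite adjE !summxE rmorph_sum.
by apply: eq_bigr => k _; rewrite adjE.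
Qed.

Lemma adjM m n p (A : 'M[C]_(m, n)) (B : 'M[C]_(n, p)) :
  adj (A *m B) = adj B *m adj A.
Proof. by rewrite /adj map_mxM trmx_mul. Qed.

Lemma adj1 n : adj (1 : 'M[C]_n) = 1.
Proof. by rewrite /adj map_mx1 trmx1. Qed.

Lemma adj_delta m n (i : 'I_m) (j : 'I_n) :
  adj (delta_mx i j : 'M[C]_(m, n)) = delta_mx j i.
Proof. by apply/matrixP => a b; rewrite adjE !mxE conjc_nat andbC. Qed.

Lemma adj_tens m n p q (A : 'M[C]_(m, n)) (B : 'M[C]_(p, q)) :
  adj (A *t B) = adj A *t adj B.
Proof. by rewrite /adj (map_mxT conjc) trmx_tens. Qed.

Lemma mxtrace_adj n (A : 'M[C]_n) : \tr (adj A) = (\tr A)^*%C.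
Proof. by rewrite mxtrace_tr (trace_map_mx conjc). Qed.

Lemma adj_quadE n m p (V : 'M[C]_(n, m)) (M : 'M[C]_n) (W : 'M[C]_(n, p)) c d :
  (adj V *m M *m W) c d = \sum_k \sum_l (V k c)^*%C * M k l * W l d.
Proof.
rewrite mxE exchange_big; apply: eq_bigr => l _.
by rewrite mxE mulr_suml; apply: eq_bigr => k _; rewrite adjE.
Qed.

Lemma mxtrace_mul_adj n m (A : 'M[C]_n) (X : 'M[C]_(n, m)) :
  \tr (A *m (X *m adj X)) = \tr (adj X *m A *m X).
Proof. by rewrite mulmxA mxtrace_mulC mulmxA. Qed.

End Adjoint.

Section Positivity.
Variable R : realType.
Local Notation C := R[i].

Lemma psd_conj n (M : 'M[C]_n) : psd M -> forall i j, M j i = (M i j)^*%C.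
Proof. by case=> M_herm _ i j; rewrite -{1}M_herm adjE. Qed.

Lemma psd_quad_ge0 n m (M : 'M[C]_n) (V : 'M[C]_(n, m)) :
  psd M -> 0 <= \tr (adj V *m M *m V).
Proof.
case=> _ M_ge0; apply: sumr_ge0 => c _.
have := M_ge0 (col c V); rewrite !adj_quadE; congr (0 <= _).
by apply: eq_bigr => k _; apply: eq_bigr => l _; rewrite !mxE.
Qed.

Lemma psd1 n : psd (1 : 'M[C]_n).
Proof.
split=> [|v]; first exact: adj1.
rewrite mulmx1 mxE; apply: sumr_ge0 => k _.
by rewrite adjE mulrC mul_conjC_ge0.
Qed.

Definition sqmod (z : C) : R := complex.Re z ^+ 2 + complex.Im z ^+ 2.

(* The hypothesis is [0 <= q (P - t Q)] for a positive semidefinite Hermitian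
   form [q] with [a = q P], [b = q Q] and [g = q(Q, P)]; the conclusion is the
   sign of the discriminant of this quadratic in [t]. *)
Lemma cauchy_schwarz_quadratic (a b g : C) : 0 <= a -> 0 <= b ->
  (forall t : C, 0 <= a - t * g^*%C - t^*%C * g + t * t^*%C * b) ->
  sqmod g <= complex.Re a * complex.Re b.
Proof.
rewrite /sqmod; case: a => A A'; case: b => B B'; case: g => x y /=.
rewrite !lecE /= => /andP [/eqP/esym A'0 A_ge0] /andP [/eqP/esym B'0 B_ge0] q_ge0.
subst A' B'.
set G := x ^+ 2 + y ^+ 2.
have G_ge0 : 0 <= G by rewrite addr_ge0 ?sqr_ge0.
have q_real_ge0 s : 0 <= A - 2 * s * G + s ^+ 2 * G * B.
  have := q_ge0 ((s * x) +i* (s * y))%C; rewrite lecE /= => /andP [_].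
  move/le_trans; apply; rewrite le_eqVlt; apply/orP; left; apply/eqP.
  by rewrite /G; ring.
have [B0 | B_neq0] := eqVneq B 0.
  rewrite B0 mulr0; have [-> // | G_neq0] := eqVneq G 0.
  have := q_real_ge0 ((A + 1) / (2 * G)); rewrite B0 mulr0 addr0.
  have -> : 2 * ((A + 1) / (2 * G)) * G = A + 1 by field.
  lra.
have B_gt0 : 0 < B by rewrite lt_def B_neq0.
have := q_real_ge0 B^-1.
have -> : A - 2 * B^-1 * G + B^-1 ^+ 2 * G * B = (A * B - G) / B by field.
by rewrite ler_pdivlMr // mul0r subr_ge0.
Qed.
Lemma psd_cauchy_schwarz n (T P Q : 'M[C]_n) : psd T ->
  sqmod (\tr (adj Q *m T *m P)) <=
  complex.Re (\tr (adj P *m T *m P)) * complex.Re (\tr (adj Q *m T *m Q)).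
Proof.
move=> T_psd; set g := \tr (adj Q *m T *m P).
have T_herm : adj T = T by case: T_psd.
apply: cauchy_schwarz_quadratic; try exact: psd_quad_ge0.
move=> t; have := psd_quad_ge0 (P - t *: Q) T_psd.
have -> : g^*%C = \tr (adj P *m T *m Q).
  by rewrite -mxtrace_adj !adjM adjK T_herm mulmxA.
rewrite adjD adjN adjZ !mulmxDl !mulmxDr !mulNmx !mulmxN.
rewrite -!scalemxAl -!scalemxAr !raddfD !raddfN /= !mxtraceZ.
by move/le_trans; apply; rewrite le_eqVlt; apply/orP; left; apply/eqP; ring.
Qed.

Lemma mx1E n (i j : 'I_n) : (1 : 'M[C]_n) i j = (i == j)%:R.
Proof. by rewrite /GRing.one /= mxE. Qed.

Lemma mxtrace_mul_tensE m n (M : 'M[C]_(m * n)) (X : 'M[C]_m) (Y : 'M[C]_n) :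
  \tr (M *m (X *t Y)) = \sum_i \sum_k \sum_j \sum_l
     M (tidx (i, k)) (tidx (j, l)) * (X j i * Y l k).
Proof.
rewrite /mxtrace sum_mxtens_index; apply: eq_bigr => i _; apply: eq_bigr => k _.
rewrite mxE sum_mxtens_index; apply: eq_bigr => j _; apply: eq_bigr => l _.
by rewrite tensmxE.
Qed.

Lemma mxtrace_mul_tens1 m n (M : 'M[C]_(m * n)) (Z : 'M[C]_m) :
  \tr (M *m (Z *t (1 : 'M[C]_n))) = \tr (ptrB m n M *m Z).
Proof.
rewrite mxtrace_mul_tensE /mxtrace; apply: eq_bigr => i _.
rewrite exchange_big mxE; apply: eq_bigr => j _.
rewrite mxE mulr_suml; apply: eq_bigr => k _.
rewrite (sum_eq_single (i := k)) ?mx1E ?eqxx ?mulr1 // => l /negbTE l_neq_k.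
by rewrite mx1E l_neq_k !mulr0.
Qed.

Lemma mxtrace_mul_1tens m n (M : 'M[C]_(m * n)) (Z : 'M[C]_n) :
  \tr (M *m ((1 : 'M[C]_m) *t Z)) = \tr (ptrA m n M *m Z).
Proof.
rewrite mxtrace_mul_tensE /mxtrace.
transitivity (\sum_i \sum_k \sum_l M (tidx (i, k)) (tidx (i, l)) * Z l k).
  apply: eq_bigr => i _; apply: eq_bigr => k _.
  rewrite (sum_eq_single (i := i)) => [|j /negbTE j_neq_i].
    by apply: eq_bigr => l _; rewrite mx1E eqxx mul1r.
  by apply: big1 => l _; rewrite mx1E j_neq_i mul0r mulr0.
rewrite exchange_big; apply: eq_bigr => k _.
rewrite exchange_big mxE; apply: eq_bigr => l _.
by rewrite mxE mulr_suml.
Qed.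

Lemma mxtrace_ptrB m n (M : 'M[C]_(m * n)) : \tr (ptrB m n M) = \tr M.
Proof.
by rewrite {2}/mxtrace sum_mxtens_index; apply: eq_bigr => i _; rewrite mxE.
Qed.

Lemma psd_ptrB m n (M : 'M[C]_(m * n)) : psd M -> psd (ptrB m n M).
Proof.
move=> M_psd; split=> [|v].
  apply/matrixP => i j; rewrite adjE !mxE rmorph_sum; apply: eq_bigr => k _.
  by rewrite [RHS](psd_conj M_psd).
rewrite -trace_mx11 -mxtrace_mul_adj -mxtrace_mul_tens1.
rewrite -[(1 : 'M[C]_n)]mulmx1 -tensmx_mul.
have -> : adj v *t (1%:M : 'M[C]_n) = adj (v *t 1) by rewrite adj_tens adj1.
by rewrite mxtrace_mul_adj psd_quad_ge0.
Qed.

Lemma psd_ptrA m n (M : 'M[C]_(m * n)) : psd M -> psd (ptrA m n M).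
Proof.
move=> M_psd; split=> [|v].
  apply/matrixP => i j; rewrite adjE !mxE rmorph_sum; apply: eq_bigr => k _.
  by rewrite [RHS](psd_conj M_psd).
rewrite -trace_mx11 -mxtrace_mul_adj -mxtrace_mul_1tens.
rewrite -[(1 : 'M[C]_m)]mulmx1 -tensmx_mul.
have -> : (1%:M : 'M[C]_m) *t adj v = adj (1 *t v) by rewrite adj_tens adj1.
by rewrite mxtrace_mul_adj psd_quad_ge0.
Qed.

Lemma tens_cauchy_schwarz m n (M : 'M[C]_(m * n)) (X : 'M[C]_m) (Y : 'M[C]_n) :
  psd M ->
  sqmod (\tr (M *m (X *t adj Y))) <=
  complex.Re (\tr (ptrB m n M *m (X *m adj X))) *
  complex.Re (\tr (ptrA m n M *m (Y *m adj Y))).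
Proof.
move=> M_psd; set g := \tr (M *m (X *t adj Y)).
have := psd_cauchy_schwarz (X *t (1 : 'M[C]_n)) (1 *t Y) M_psd.
have -> : \tr (adj (1 *t Y) *m M *m (X *t 1)) = g.
  rewrite mxtrace_mulC mulmxA mxtrace_mulC adj_tens adj1 tensmx_mul.
  by rewrite mul1mx mulmx1.
rewrite -mxtrace_mul_tens1 -mxtrace_mul_1tens -!mxtrace_mul_adj !adj_tens !adj1.
by rewrite !tensmx_mul !mulmx1.
Qed.

End Positivity.

Section CompletePositivity.
Variable R : realType.
Local Notation C := R[i].

Definition mxblk k n (M : 'M[C]_(k * n)) (i j : 'I_k) : 'M[C]_n :=
  \matrix_(a, b) M (tidx (i, a)) (tidx (j, b)).

Definition colblk k n m (V : 'M[C]_(k * n, m)) (i : 'I_k) : 'M[C]_(n, m) :=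
  \matrix_(a, c) V (tidx (i, a)) c.

Lemma mxtrace_quad_blocks k n m (M : 'M[C]_(k * n)) (V : 'M[C]_(k * n, m)) :
  \tr (adj V *m M *m V) =
  \sum_i \sum_j \tr (adj (colblk V i) *m mxblk M i j *m colblk V j).
Proof.
rewrite /mxtrace.
transitivity (\sum_c \sum_i \sum_a \sum_j \sum_b
   (V (tidx (i, a)) c)^*%C * M (tidx (i, a)) (tidx (j, b)) * V (tidx (j, b)) c).
  apply: eq_bigr => c _; rewrite adj_quadE sum_mxtens_index; apply: eq_bigr => i _.
  by apply: eq_bigr => a _; rewrite sum_mxtens_index.
rewrite exchange_big; apply: eq_bigr => i _.
under eq_bigr => c _ do rewrite exchange_big.
rewrite exchange_big; apply: eq_bigr => j _; apply: eq_bigr => c _.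
rewrite adj_quadE; apply: eq_bigr => a _; apply: eq_bigr => b _.
by rewrite !mxE.
Qed.

Lemma amplE k dA dA' (Phi : 'M[C]_dA -> 'M[C]_dA') (M : 'M[C]_(k * dA)) i a j b :
  ampl Phi M (tidx (i, a)) (tidx (j, b)) = Phi (mxblk M i j) a b.
Proof.
rewrite /ampl summxE (sum_eq_single (i := i)) => [|i' /negbTE i'_neq_i].
  rewrite summxE (sum_eq_single (i := j)) => [|j' /negbTE j'_neq_j].
    by rewrite tensmxE !mxE !eqxx mul1r.
  by rewrite tensmxE !mxE eq_sym j'_neq_j andbF mul0r.
by rewrite summxE big1 // => j' _; rewrite tensmxE !mxE eq_sym i'_neq_i mul0r.
Qed.

Lemma mxblk_ampl k dA dA' (Phi : 'M[C]_dA -> 'M[C]_dA') (M : 'M[C]_(k * dA)) i j :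
  mxblk (ampl Phi M) i j = Phi (mxblk M i j).
Proof. by apply/matrixP => a b; rewrite mxE amplE. Qed.

(* The block matrix [(G_i^* rho G_j)_(i,j)]: the Gram matrix of the
   vectors [G_i] for the semi-inner product [rho]. *)
Definition gram_mx k n (rho : 'M[C]_n) (G : 'I_k -> 'M[C]_n) : 'M[C]_(k * n) :=
  \matrix_(p, q) (adj (G (untidx p).1) *m rho *m G (untidx q).1)
                   (untidx p).2 (untidx q).2.

Lemma mxblk_gram k n rho (G : 'I_k -> 'M[C]_n) i j :
  mxblk (gram_mx rho G) i j = adj (G i) *m rho *m G j.
Proof. by apply/matrixP => a b; rewrite !mxE !mxtens_indexK. Qed.

Lemma psd_gram k n rho (G : 'I_k -> 'M[C]_n) : psd rho -> psd (gram_mx rho G).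
Proof.
move=> rho_psd; have rho_herm : adj rho = rho by case: rho_psd.
split=> [|v].
  apply/matrixP => p q.
  case: (mxtens_indexP p) => i a; case: (mxtens_indexP q) => j b.
  have gramE p' q' : gram_mx rho G p' q' =
      (adj (G (untidx p').1) *m rho *m G (untidx q').1) (untidx p').2 (untidx q').2.
    by rewrite mxE.
  by rewrite adjE !gramE !mxtens_indexK /= -adjE !adjM adjK rho_herm mulmxA.
pose w := \sum_j G j *m colblk v j.
have := psd_quad_ge0 w rho_psd.
have -> : adj w *m rho *m w =
    \sum_i \sum_j adj (colblk v i) *m (adj (G i) *m rho *m G j) *m colblk v j.
  rewrite /w adj_sum !mulmx_suml; apply: eq_bigr => i _.
  by rewrite mulmx_sumr; apply: eq_bigr => j _; rewrite adjM !mulmxA.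
rewrite -trace_mx11 mxtrace_quad_blocks !raddf_sum /=.
congr (0 <= _); apply: eq_bigr => i _.
by rewrite raddf_sum; apply: eq_bigr => j _; rewrite mxblk_gram.
Qed.

End CompletePositivity.

Section Duality.
Variable R : realType.
Local Notation C := R[i].

Definition dualmap n n' (Phi : 'M[C]_n -> 'M[C]_n') (W : 'M[C]_n') : 'M[C]_n :=
  \matrix_(b, a) \tr (Phi (delta_mx a b) *m W).

Lemma linear_deltaE n n' (Phi : {linear 'M[C]_n -> 'M[C]_n'}) (Z : 'M[C]_n) :
  Phi Z = \sum_i \sum_j Z i j *: Phi (delta_mx i j).
Proof.
rewrite {1}(matrix_sum_delta Z) linear_sum; apply: eq_bigr => i _.
by rewrite linear_sum; apply: eq_bigr => j _; rewrite linearZ.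
Qed.

Lemma linear_deltaEij n n' (Phi : {linear 'M[C]_n -> 'M[C]_n'}) (Z : 'M[C]_n) a b :
  Phi Z a b = \sum_i \sum_j Z i j * Phi (delta_mx i j) a b.
Proof.
rewrite linear_deltaE summxE; apply: eq_bigr => i _.
by rewrite summxE; apply: eq_bigr => j _; rewrite mxE.
Qed.

Lemma dualmapP n n' (Phi : {linear 'M[C]_n -> 'M[C]_n'}) (Z : 'M[C]_n) (W : 'M[C]_n') :
  \tr (Phi Z *m W) = \tr (Z *m dualmap Phi W).
Proof.
rewrite linear_deltaE mulmx_suml raddf_sum /= {2}/mxtrace; apply: eq_bigr => i _.
rewrite mulmx_suml raddf_sum /= mxE; apply: eq_bigr => j _.
by rewrite -scalemxAl mxtraceZ mxE.
Qed.

Section CP.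
Variables (dA dA' : nat) (Phi : {linear 'M[C]_dA -> 'M[C]_dA'}).
Hypothesis Phi_cp : completely_positive Phi.

(* The amplified Gram matrix of [(1, B)] is Hermitian and has [Phi B] as an
   off-diagonal block. *)
Lemma cp_adj (B : 'M[C]_dA) : Phi (adj B) = adj (Phi B).
Proof.
have [gram_herm _] := Phi_cp (psd_gram (fun i : 'I_2 => if i == 0 then 1 else B) (psd1 R dA)).
apply/matrixP => a b; rewrite adjE.
have := congr1 (fun M : 'M[C]_(2 * dA') => M (tidx (ord_max, a)) (tidx (ord0, b))) gram_herm.
by rewrite /= adjE !amplE !mxblk_gram /= adj1 !mulmx1 mul1mx => <-.
Qed.

Lemma dualmap_adj (W : 'M[C]_dA') : dualmap Phi (adj W) = adj (dualmap Phi W).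
Proof.
apply/matrixP => b a; rewrite adjE !mxE -mxtrace_adj adjM.
by rewrite -cp_adj adj_delta mxtrace_mulC.
Qed.

Hypothesis Phi_tp : trace_preserving Phi.

(* Positivity of the amplification of the Gram matrix of [(1, Z)] w.r.t.
   [rho], tested on the vector [(-W, 1)]. *)
Lemma kadison_schwarz (rho : 'M[C]_dA) (W : 'M[C]_dA') : psd rho ->
  \tr (rho *m (dualmap Phi W *m adj (dualmap Phi W))) <= \tr (Phi rho *m (W *m adj W)).
Proof.
move=> rho_psd; rewrite !mxtrace_mul_adj; set Z := dualmap Phi W.
have rho_herm : adj rho = rho by case: rho_psd.
have ampl_psd := Phi_cp (psd_gram (fun i : 'I_2 => if i == 0 then 1 else Z) rho_psd).
pose V : 'M[C]_(2 * dA', dA') := \matrix_(p, c)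
  (if (untidx p).1 == 0 then - W (untidx p).2 c else ((untidx p).2 == c)%:R).
have := psd_quad_ge0 V ampl_psd; rewrite mxtrace_quad_blocks.
rewrite !big_ord_recl !big_ord0 !addr0.
have -> : colblk V 0 = - W by apply/matrixP => a c; rewrite !mxE mxtens_indexK.
have -> : colblk V (lift 0 0) = 1 by apply/matrixP => a c; rewrite !mxE mxtens_indexK.
rewrite !mxblk_ampl !mxblk_gram /= adj1 adjN !mul1mx !mulmx1 !mulNmx !mulmxN opprK.
rewrite adj1 !mul1mx !raddfN /= Phi_tp.
have ZrhoZ_ge0 : 0 <= \tr (adj Z *m rho *m Z) by apply: psd_quad_ge0.
have e1 : \tr (Phi (adj Z *m rho) *m W) = \tr (adj Z *m rho *m Z) by rewrite dualmapP.
have e2 : \tr (adj W *m Phi (rho *m Z)) = \tr (adj Z *m rho *m Z).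
  have -> : rho *m Z = adj (adj Z *m rho) by rewrite adjM adjK rho_herm.
  by rewrite cp_adj -adjM mxtrace_adj e1; exact: geC0_conj.
rewrite e1 e2 => ge0; rewrite -subr_ge0; apply: le_trans ge0 _.
by rewrite le_eqVlt; apply/orP; left; apply/eqP; ring.
Qed.

End CP.
End Duality.

Section LocalChannels.
Variable R : realType.
Local Notation C := R[i].

Lemma mxtrace_delta n (k l : 'I_n) : \tr (delta_mx k l : 'M[C]_n) = (k == l)%:R.
Proof.
rewrite /mxtrace (sum_eq_single (i := k)) ?mxE ?eqxx // => j /negbTE j_neq_k.
by rewrite mxE j_neq_k.
Qed.

Lemma mxtrace_tens m n (A : 'M[C]_m) (B : 'M[C]_n) : \tr (A *t B) = \tr A * \tr B.
Proof.
rewrite /mxtrace mulr_sum; apply: eq_bigr => k _.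
by case: (mxtens_indexP k) => i j; rewrite tensmxE mxtens_indexK.
Qed.

Variables (dA dB dA' dB' : nat).
Variables (Phi : {linear 'M[C]_dA -> 'M[C]_dA'}) (Psi : {linear 'M[C]_dB -> 'M[C]_dB'}).

Lemma tensmapE (M : 'M[C]_(dA * dB)) a b c d :
  tensmap Phi Psi M (tidx (a, b)) (tidx (c, d)) =
  \sum_i \sum_j \sum_k \sum_l M (tidx (i, k)) (tidx (j, l)) *
     (Phi (delta_mx i j) a c * Psi (delta_mx k l) b d).
Proof.
rewrite /tensmap summxE; apply: eq_bigr => i _; rewrite summxE; apply: eq_bigr => j _.
rewrite summxE; apply: eq_bigr => k _; rewrite summxE; apply: eq_bigr => l _.
by rewrite mxE tensmxE.
Qed.

Lemma tensmap_is_linear : linear (tensmap Phi Psi).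
Proof.
move=> c M N; rewrite /tensmap scaler_sumr -big_split; apply: eq_bigr => i _.
rewrite scaler_sumr -big_split; apply: eq_bigr => j _.
rewrite scaler_sumr -big_split; apply: eq_bigr => k _.
rewrite scaler_sumr -big_split; apply: eq_bigr => l _.
by rewrite !mxE scalerDl scalerA.
Qed.

HB.instance Definition _ :=
  GRing.isLinear.Build C 'M[C]_(dA * dB) 'M[C]_(dA' * dB') _ (tensmap Phi Psi)
    tensmap_is_linear.

Lemma tensmap_dual (M : 'M[C]_(dA * dB)) (X : 'M[C]_dA') (Y : 'M[C]_dB') :
  \tr (tensmap Phi Psi M *m (X *t Y)) = \tr (M *m (dualmap Phi X *t dualmap Psi Y)).
Proof.
rewrite [RHS]mxtrace_mul_tensE /tensmap mulmx_suml raddf_sum /=; apply: eq_bigr => i _.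
rewrite mulmx_suml raddf_sum /= [RHS]exchange_big; apply: eq_bigr => j _.
rewrite mulmx_suml raddf_sum /=; apply: eq_bigr => k _.
rewrite mulmx_suml raddf_sum /=; apply: eq_bigr => l _.
by rewrite -scalemxAl mxtraceZ tensmx_mul mxtrace_tens !mxE.
Qed.

Lemma ptrB_tensmap (M : 'M[C]_(dA * dB)) :
  trace_preserving Psi -> ptrB dA' dB' (tensmap Phi Psi M) = Phi (ptrB dA dB M).
Proof.
move=> Psi_tp; apply/matrixP => a c; rewrite mxE linear_deltaEij.
under eq_bigr => b _ do rewrite tensmapE.
rewrite exchange_big; apply: eq_bigr => i _.
rewrite exchange_big; apply: eq_bigr => j _.
rewrite mxE mulr_suml exchange_big; apply: eq_bigr => k _.
rewrite exchange_big (sum_eq_single (i := k)) => [|l l_neq_k].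
  rewrite -!mulr_sumr; congr (_ * _).
  have := Psi_tp (delta_mx k k).
  by rewrite mxtrace_delta eqxx /mxtrace => ->; rewrite mulr1.
rewrite -!mulr_sumr.
have := Psi_tp (delta_mx k l); rewrite mxtrace_delta eq_sym (negbTE l_neq_k).
by rewrite /mxtrace => ->; rewrite !mulr0.
Qed.

Lemma ptrA_tensmap (M : 'M[C]_(dA * dB)) :
  trace_preserving Phi -> ptrA dA' dB' (tensmap Phi Psi M) = Psi (ptrA dA dB M).
Proof.
move=> Phi_tp; apply/matrixP => b d; rewrite mxE linear_deltaEij.
under eq_bigr => a _ do rewrite tensmapE.
have trace_out i j : \sum_a \sum_k \sum_l M (tidx (i, k)) (tidx (j, l)) *
     (Phi (delta_mx i j) a a * Psi (delta_mx k l) b d) =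
   (i == j)%:R * \sum_k \sum_l M (tidx (i, k)) (tidx (j, l)) * Psi (delta_mx k l) b d.
  rewrite mulr_sumr exchange_big; apply: eq_bigr => k _.
  rewrite mulr_sumr exchange_big; apply: eq_bigr => l _.
  rewrite -mulr_sumr -mulr_suml.
  have := Phi_tp (delta_mx i j); rewrite mxtrace_delta /mxtrace => ->.
  by rewrite mulrCA mulrA.
transitivity (\sum_i \sum_k \sum_l M (tidx (i, k)) (tidx (i, l)) * Psi (delta_mx k l) b d).
  rewrite exchange_big; apply: eq_bigr => i _.
  rewrite exchange_big (sum_eq_single (i := i)) => [|j j_neq_i].
    by rewrite trace_out eqxx mul1r.
  by rewrite trace_out eq_sym (negbTE j_neq_i) mul0r.
rewrite exchange_big; apply: eq_bigr => k _.
by rewrite exchange_big; apply: eq_bigr => l _; rewrite mxE mulr_suml.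
Qed.

End LocalChannels.

Section Density.
Variable R : realType.
Local Notation C := R[i].

Definition swapmx m n (M : 'M[C]_(m * n)) : 'M[C]_(n * m) :=
  \matrix_(p, q) M (tidx ((untidx p).2, (untidx p).1)) (tidx ((untidx q).2, (untidx q).1)).

Lemma swapmxE m n (M : 'M[C]_(m * n)) a b c d :
  swapmx M (tidx (a, b)) (tidx (c, d)) = M (tidx (b, a)) (tidx (d, c)).
Proof. by rewrite mxE !mxtens_indexK. Qed.

Lemma psd_swapmx m n (M : 'M[C]_(m * n)) : psd M -> psd (swapmx M).
Proof.
move=> M_psd; split=> [|v].
  apply/matrixP => p q.
  case: (mxtens_indexP p) => a b; case: (mxtens_indexP q) => c d.
  by rewrite adjE !swapmxE -(psd_conj M_psd).
case: M_psd => _ /(_ (\matrix_(p, c) v (tidx ((untidx p).2, (untidx p).1)) c)).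
rewrite !adj_quadE; congr (0 <= _).
rewrite [LHS]sum_mxtens_index [RHS]sum_mxtens_index exchange_big.
apply: eq_bigr => b _; apply: eq_bigr => a _.
rewrite [LHS]sum_mxtens_index [RHS]sum_mxtens_index exchange_big.
by apply: eq_bigr => d _; apply: eq_bigr => c _; rewrite !mxE !mxtens_indexK.
Qed.

(* [Phi (x) Psi = (Phi (x) id) o (id (x) Psi)], and [Phi (x) id] is
   [id (x) Phi] conjugated by the swap of the tensor factors. *)
Lemma tensmap_swapmx dA dB dA' dB' (Phi : {linear 'M[C]_dA -> 'M[C]_dA'})
    (Psi : {linear 'M[C]_dB -> 'M[C]_dB'}) (M : 'M[C]_(dA * dB)) :
  tensmap Phi Psi M = swapmx (ampl Phi (swapmx (ampl Psi M))).
Proof.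
apply/matrixP => p q.
case: (mxtens_indexP p) => a b; case: (mxtens_indexP q) => c d.
rewrite tensmapE swapmxE amplE [in RHS]linear_deltaEij.
apply: eq_bigr => i _; apply: eq_bigr => j _.
rewrite [mxblk _ _ _ _ _]mxE swapmxE amplE [in RHS](linear_deltaEij Psi) mulr_suml.
apply: eq_bigr => k _; rewrite mulr_suml; apply: eq_bigr => l _.
by rewrite mxE mulrAC -mulrA.
Qed.

Lemma density_tensmap dA dB dA' dB' (Phi : {linear 'M[C]_dA -> 'M[C]_dA'})
    (Psi : {linear 'M[C]_dB -> 'M[C]_dB'}) (M : 'M[C]_(dA * dB)) :
  completely_positive Phi -> trace_preserving Phi ->
  completely_positive Psi -> trace_preserving Psi ->
  density M -> density (tensmap Phi Psi M).
Proof.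
move=> Phi_cp Phi_tp Psi_cp Psi_tp [M_psd trM]; split.
  by rewrite tensmap_swapmx; apply/psd_swapmx/Phi_cp/psd_swapmx/Psi_cp.
by rewrite -mxtrace_ptrB ptrB_tensmap // Phi_tp mxtrace_ptrB.
Qed.

End Density.

Section MaximalCorrelation.
Variable R : realType.
Local Notation C := R[i].

Definition corr_set dA dB (rho : 'M[C]_(dA * dB)) : set R :=
  [set r : R | exists (X : 'M[C]_dA) (Y : 'M[C]_dB),
     [/\ \tr (ptrB dA dB rho *m X) = 0, \tr (ptrA dA dB rho *m Y) = 0,
         \tr (ptrB dA dB rho *m (X *m adj X)) = 1,
         \tr (ptrA dA dB rho *m (Y *m adj Y)) = 1
       & real_complex R r = `|\tr (rho *m (X *t adj Y))|]].

Lemma real_normcE (z : C) (r : R) : real_complex R r = `|z| ->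
  r = Num.sqrt (sqmod z).
Proof. by rewrite normc_def => /complexI. Qed.

Lemma Re_le (z w : C) : z <= w -> complex.Re z <= complex.Re w.
Proof. by rewrite lecE => /andP []. Qed.

Lemma ge0_complexE (z : C) : 0 <= z -> z = real_complex R (complex.Re z).
Proof. by case: z => a b; rewrite lecE /= => /andP [/eqP -> _]. Qed.

Lemma maxcorr_eq0 dA dB (rho : 'M[C]_(dA * dB)) :
  ~ (exists r, corr_set rho r) -> maxcorr dA dB rho = 0.
Proof.
move=> corr_set0; rewrite (_ : maxcorr dA dB rho = sup (corr_set rho)) //.
rewrite (_ : corr_set rho = set0) ?sup0 //.
by apply/seteqP; split => // r r_corr; apply: corr_set0; exists r.
Qed.

Lemma maxcorr_le_ub dA dB (rho : 'M[C]_(dA * dB)) m : 0 <= m ->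
  (forall r, corr_set rho r -> r <= m) -> maxcorr dA dB rho <= m.
Proof.
move=> m_ge0 le_m.
have [[r r_corr] | /maxcorr_eq0 -> //] := pselect (exists r, corr_set rho r).
by apply: ge_sup => //; exists r.
Qed.

Variables (dA dB : nat) (tau : 'M[C]_(dA * dB)).
Hypothesis tau_psd : psd tau.

Lemma corr_set_bounded r : corr_set tau r -> 0 <= r <= 1.
Proof.
move=> [X [Y [_ _ nX nY /real_normcE ->]]].
rewrite sqrtr_ge0 /= -sqrtr1 ler_sqrt //.
by have := tens_cauchy_schwarz X Y tau_psd; rewrite nX nY /= mulr1.
Qed.

Lemma le_maxcorr r : corr_set tau r -> r <= maxcorr dA dB tau.
Proof.
move=> tau_r; apply: ub_le_sup => //.
by exists 1 => s /corr_set_bounded /andP [].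
Qed.

Lemma maxcorr_ge0 : 0 <= maxcorr dA dB tau.
Proof.
have [[r tau_r] | /maxcorr_eq0 -> //] := pselect (exists r, corr_set tau r).
by apply: le_trans (le_maxcorr tau_r); case/andP: (corr_set_bounded tau_r).
Qed.

Lemma ptrB_var_ge0 (X : 'M[C]_dA) : 0 <= \tr (ptrB dA dB tau *m (X *m adj X)).
Proof. by rewrite mxtrace_mul_adj; apply/psd_quad_ge0/psd_ptrB. Qed.

Lemma ptrA_var_ge0 (Y : 'M[C]_dB) : 0 <= \tr (ptrA dA dB tau *m (Y *m adj Y)).
Proof. by rewrite mxtrace_mul_adj; apply/psd_quad_ge0/psd_ptrA. Qed.

Section Rescaling.
Variables (X : 'M[C]_dA) (Y : 'M[C]_dB).
Hypotheses (X_centred : \tr (ptrB dA dB tau *m X) = 0)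
           (Y_centred : \tr (ptrA dA dB tau *m Y) = 0).
Let g := \tr (tau *m (X *t adj Y)).
Let A := complex.Re (\tr (ptrB dA dB tau *m (X *m adj X))).
Let B := complex.Re (\tr (ptrA dA dB tau *m (Y *m adj Y))).

Lemma rescaled_corr_set : 0 < A -> 0 < B ->
  corr_set tau (Num.sqrt (sqmod g) / (Num.sqrt A * Num.sqrt B)).
Proof.
move=> A_gt0 B_gt0; have sA_gt0 : 0 < Num.sqrt A by rewrite sqrtr_gt0.
have sB_gt0 : 0 < Num.sqrt B by rewrite sqrtr_gt0.
have [aE bE] := (ge0_complexE (ptrB_var_ge0 X), ge0_complexE (ptrA_var_ge0 Y)).
exists (real_complex R (Num.sqrt A)^-1 *: X), (real_complex R (Num.sqrt B)^-1 *: Y).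
split.
- by rewrite -scalemxAr mxtraceZ X_centred mulr0.
- by rewrite -scalemxAr mxtraceZ Y_centred mulr0.
- rewrite adjZ conjc_real -scalemxAl -!scalemxAr !mxtraceZ aE -!rmorphM /=.
  by rewrite mulrA -invfM -expr2 sqr_sqrtr ?mulVf ?ltW ?gt_eqF.
- rewrite adjZ conjc_real -scalemxAl -!scalemxAr !mxtraceZ bE -!rmorphM /=.
  by rewrite mulrA -invfM -expr2 sqr_sqrtr ?mulVf ?ltW ?gt_eqF.
- rewrite adjZ conjc_real tensmxZl tensmxZr -!scalemxAr !mxtraceZ -/g.
  rewrite !normrM [`|g|]normc_def !ger0_norm ?ler0c ?invr_ge0 ?ltW // -!rmorphM.
  by rewrite /= mulrC invfM mulrA.
Qed.

Lemma centred_corr_le : sqmod g <= A * B * maxcorr dA dB tau ^+ 2.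
Proof.
have cs : sqmod g <= A * B by apply: tens_cauchy_schwarz.
have A_ge0 : 0 <= A := Re_le (ptrB_var_ge0 X).
have B_ge0 : 0 <= B := Re_le (ptrA_var_ge0 Y).
have [A0 | A_neq0] := eqVneq A 0; first by move: cs; rewrite A0 !mul0r.
have [B0 | B_neq0] := eqVneq B 0; first by move: cs; rewrite B0 mulr0 mul0r.
have A_gt0 : 0 < A by rewrite lt_def A_neq0.
have B_gt0 : 0 < B by rewrite lt_def B_neq0.
have := le_maxcorr (rescaled_corr_set A_gt0 B_gt0).
set r := _ / _ => r_le.
have r_ge0 : 0 <= r by apply: divr_ge0; rewrite ?mulr_ge0 ?sqrtr_ge0.
have -> : sqmod g = r ^+ 2 * (A * B).
  rewrite /r expr_div_n exprMn !sqr_sqrtr ?addr_ge0 ?sqr_ge0 ?ltW // divfK //.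
  by rewrite mulf_neq0.
by rewrite mulrC ler_wpM2l ?mulr_ge0 //; nra.
Qed.

End Rescaling.

End MaximalCorrelation.

Lemma maxcorr_tensmap_le (R : realType) dA dB dA' dB'
    (Phi : {linear 'M[R[i]]_dA -> 'M[R[i]]_dA'})
    (Psi : {linear 'M[R[i]]_dB -> 'M[R[i]]_dB'}) (tau : 'M[R[i]]_(dA * dB)) :
  completely_positive Phi -> trace_preserving Phi ->
  completely_positive Psi -> trace_preserving Psi ->
  density tau -> maxcorr dA' dB' (tensmap Phi Psi tau) <= maxcorr dA dB tau.
Proof.
move=> Phi_cp Phi_tp Psi_cp Psi_tp [tau_psd _].
have m_ge0 := maxcorr_ge0 tau_psd.
apply: maxcorr_le_ub => // r [X' [Y' [cX' cY' nX' nY' rE]]].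
rewrite ptrB_tensmap // in cX' nX'; rewrite ptrA_tensmap // in cY' nY'.
set X := dualmap Phi X'; set Y := dualmap Psi Y'.
have cX : \tr (ptrB dA dB tau *m X) = 0 by rewrite -dualmapP.
have cY : \tr (ptrA dA dB tau *m Y) = 0 by rewrite -dualmapP.
rewrite tensmap_dual (dualmap_adj Psi_cp) -/X -/Y in rE.
have nX_le1 := Re_le (kadison_schwarz Phi_cp Phi_tp X' (psd_ptrB tau_psd)).
have nY_le1 := Re_le (kadison_schwarz Psi_cp Psi_tp Y' (psd_ptrA tau_psd)).
rewrite -/X -/Y nX' nY' /= in nX_le1 nY_le1.
have nX_ge0 := Re_le (ptrB_var_ge0 tau_psd X).
have nY_ge0 := Re_le (ptrA_var_ge0 tau_psd Y).
rewrite (real_normcE rE) -(ger0_norm m_ge0) -sqrtr_sqr ler_sqrt ?sqr_ge0 //.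
apply: le_trans (centred_corr_le tau_psd cX cY) _.
by rewrite -[X in _ <= X]mul1r ler_wpM2r ?sqr_ge0 ?mulr_ile1.
Qed.

Lemma maxent_le_decomposition (R : realType) dA dB (sigma : 'M[R[i]]_(dA * dB))
    n (p : 'I_n -> R) (tau : 'I_n -> 'M[R[i]]_(dA * dB)) :
  (forall i, 0 <= p i) -> (forall i, density (tau i)) ->
  sigma = \sum_(i < n) real_complex R (p i) *: tau i ->
  maxent dA dB sigma <= \big[Num.max/0]_(i < n) maxcorr dA dB (tau i).
Proof.
move=> p_ge0 tau_dens sigmaE; apply: ge_inf; last by exists n, p, tau.
exists 0 => _ [m [q [upsilon [_ _ _ ->]]]].
by elim/big_rec: _ => // i x _ x_ge0; rewrite le_max x_ge0 orbT.
Qed.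

Unset Implicit Arguments.

Theorem theorem4 (R : realType) (dA dB dA' dB' : nat)
  (rho : 'M[R[i]]_(dA * dB))
  (Phi : {linear 'M[R[i]]_dA -> 'M[R[i]]_dA'})
  (Psi : {linear 'M[R[i]]_dB -> 'M[R[i]]_dB'}) :
  density rho ->
  completely_positive Phi -> trace_preserving Phi ->
  completely_positive Psi -> trace_preserving Psi ->
  maxent dA' dB' (tensmap Phi Psi rho) <= maxent dA dB rho.
Proof.
move=> rho_dens Phi_cp Phi_tp Psi_cp Psi_tp.
apply: lb_le_inf => [|_ [n [p [tau [p_ge0 tau_dens rhoE ->]]]]].
  exists (\big[Num.max/0]_(i < 1) maxcorr dA dB rho), 1%N, (fun=> 1), (fun=> rho).
  by split => //; rewrite big_ord1 rmorph1 scale1r.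
apply: le_trans (maxent_le_decomposition (tau := tensmap Phi Psi \o tau) p_ge0 _ _) _.
- by move=> i; apply: density_tensmap.
- by rewrite rhoE linear_sum; apply: eq_bigr => i _; rewrite linearZ.
by apply: le_bigmax2 => i _; apply: maxcorr_tensmap_le.
Qed.
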